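(* Fix $\mu>0$. For $r\in(0,1)$ consider the equation in the unknown $\kappa\in(0,2\pi)$ $$\frac{4}{\kappa}\tan\frac{\kappa}{4}=\Big(\frac{1-r^2/48}{1-7r^2/48}\Big)\Big[1-\frac{\kappa^2}{\mu}\Big].$$ For each such $r$ this equation has exactly one root $\kappa(r)\in(0,2\pi)$, and $$\lim_{r\to0^+}\frac{\kappa(r)}{r}=\sqrt{\frac{6}{1+48/\mu}} .$$ Consequently, writing $\kappa=kh$ and $r=h/H$, the corresponding wavenumber satisfies $kH\to\sqrt{6/(1+48/\mu)}$, and this limit equals $\pi/2$ if and only if $\frac1\mu=\frac{24/\pi^2-1}{48}$, i.e. $\mu=\frac{48}{24/\pi^2-1}\approx 33.53$.
   Context: This equation is the non-trivial factor of the characteristic equation for symmetric eigenmodes $e^{-Kk^2t}\phi(x)$ of a $2h$-periodic patch heat problem with proportional control of strength $\mu$ in two action regions, where $r=h/H$ is the ratio of patch half-width $h$ to macroscale half-width $H$; $\pi/2$ is the value of $kH$ for the slowest mode $\cos(\pi x/(2H))$ of the heat equation on $(-H,H)$ with Dirichlet conditions. *)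

From Stdlib Require Import Reals Lra.
Open Scope R_scope.

Definition patch_lhs (kappa : R) : R := (4 / kappa) * tan (kappa / 4).

Definition patch_rhs (mu r kappa : R) : R :=
  ((1 - r ^ 2 / 48) / (1 - 7 * r ^ 2 / 48)) * (1 - kappa ^ 2 / mu).

Definition is_root (mu r kappa : R) : Prop :=
  0 < kappa < 2 * PI /\ patch_lhs kappa = patch_rhs mu r kappa.

From Stdlib Require Import Reals Ranalysis5 Lra Psatz.
From Coquelicot Require Import Coquelicot.
Open Scope R_scope.

(* The left-hand side is tan(x)/x at x = kappa/4, which increases from 1, while the
   right-hand side decreases in kappa and starts at the coefficient c(r) > 1; at
   kappa = 3 the left-hand side already exceeds it, so the intermediate value theorem
   gives exactly one root.  For the asymptotics, tan x = x + x^3/3 + O(x^5) turns the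
   equation into kappa^2 (1/48 + c/mu) = c - 1 + O(kappa^4), and c - 1 = r^2/8 + O(r^4),
   so (kappa/r)^2 (1/48 + 1/mu) = 1/8 + O(r^2); hence kappa/r = sqrt(6/(1+48/mu)) + O(r^2). *)

Lemma sin_lower_taylor x : 0 <= x <= PI -> x - x^3/6 + x^5/120 - x^7/5040 <= sin x.
Proof.
  intros [H0 H1]; destruct (sin_bound x 1 H0 H1) as [H _].
  unfold sin_approx, sin_term in H; simpl in H; lra.
Qed.

Lemma sin_upper_taylor x : 0 <= x <= PI -> sin x <= x - x^3/6 + x^5/120.
Proof.
  intros [H0 H1]; destruct (sin_bound x 0 H0 H1) as [_ H].
  unfold sin_approx, sin_term in H; simpl in H; lra.
Qed.

Lemma cos_lower_taylor x : - PI/2 <= x <= PI/2 -> 1 - x^2/2 <= cos x.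
Proof.
  intros [H0 H1]; destruct (cos_bound x 0 H0 H1) as [H _].
  unfold cos_approx, cos_term in H; simpl in H; lra.
Qed.

Lemma cos_upper_taylor x : - PI/2 <= x <= PI/2 -> cos x <= 1 - x^2/2 + x^4/24.
Proof.
  intros [H0 H1]; destruct (cos_bound x 0 H0 H1) as [_ H].
  unfold cos_approx, cos_term in H; simpl in H; lra.
Qed.

Lemma tan_ge_cubic x : 0 < x < PI/2 -> x + x^3/3 <= tan x.
Proof.
  intros [H0 H1].
  pose proof PI_4.
  assert (Hcos : 0 < cos x) by (apply cos_gt_0; lra).
  pose proof (sin_lower_taylor x ltac:(lra)) as Hsin.
  pose proof (cos_upper_taylor x ltac:(lra)) as Hcos4.
  unfold tan; apply Rle_div_r; [exact Hcos|].
  assert (Hpoly : 0 <= x^5 * (2/15 - x^2 * (1/72 + 1/5040)))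
    by (apply Rmult_le_pos; [apply pow_le; lra | nra]).
  assert ((x + x^3/3) * cos x <= (x + x^3/3) * (1 - x^2/2 + x^4/24))
    by (apply Rmult_le_compat_l; [pose proof (pow_le x 3); lra | exact Hcos4]).
  nra.
Qed.

Lemma tan_le_quintic x : 0 < x <= 1 -> tan x <= x + x^3/3 + x^5.
Proof.
  intros [H0 H1].
  pose proof PI2_3_2.
  assert (Hcos : 0 < cos x) by (apply cos_gt_0; lra).
  pose proof (sin_upper_taylor x ltac:(lra)) as Hsin.
  pose proof (cos_lower_taylor x ltac:(lra)) as Hcos2.
  unfold tan; apply Rle_div_l; [exact Hcos|].
  assert (Hpoly : 0 <= x^5 * (1 - 1/6 - 1/120 - x^2/2))
    by (apply Rmult_le_pos; [apply pow_le; lra | nra]).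
  assert ((x + x^3/3 + x^5) * (1 - x^2/2) <= (x + x^3/3 + x^5) * cos x)
    by (apply Rmult_le_compat_l;
        [pose proof (pow_le x 3); pose proof (pow_le x 5); lra | exact Hcos2]).
  nra.
Qed.

Lemma tan_div_id_lt x y : 0 < x -> x < y -> y < PI/2 -> tan x / x < tan y / y.
Proof.
  intros Hx Hxy Hy.
  apply (incr_function (fun t => tan t / t) (Finite 0) (Finite (PI/2))
    (fun t => ((tan t ^ 2 + 1) * t - tan t * 1) / t ^ 2)); try (simpl; lra).
  - intros t H0 H1; simpl in H0, H1.
    assert (0 < cos t) by (apply cos_gt_0; lra).
    apply is_derive_div; [apply is_derive_tan; lra | apply (is_derive_id (K := R_AbsRing)) | lra].
  - intros t H0 H1; simpl in H0, H1.
    assert (Hcos : 0 < cos t) by (apply cos_gt_0; lra).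
    apply Rdiv_lt_0_compat; [|apply pow_lt; lra].
    (* sin (2t) < 2t *)
    assert (Hsc : sin t * cos t < t) by (pose proof (sin_lt_x (2 * t)); rewrite sin_2a in *; lra).
    assert (Hnum : (tan t ^ 2 + 1) * t - tan t * 1 = (t - sin t * cos t) / cos t ^ 2).
    { pose proof (sin2_cos2 t) as Hpyth; unfold Rsqr in Hpyth.
      unfold tan; field_simplify; [|lra..].
      replace (sin t ^ 2 * t) with ((1 - cos t ^ 2) * t) by (simpl; nra). field. lra. }
    rewrite Hnum; apply Rdiv_lt_0_compat; [lra | apply pow_lt; lra].
Qed.

Lemma patch_lhs_tan k : k <> 0 -> patch_lhs k = tan (k/4) / (k/4).
Proof. intros Hk; unfold patch_lhs; field; exact Hk. Qed.

Lemma patch_lhs_lt k1 k2 : 0 < k1 -> k1 < k2 -> k2 < 2 * PI -> patch_lhs k1 < patch_lhs k2.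
Proof. intros; rewrite !patch_lhs_tan by lra; apply tan_div_id_lt; lra. Qed.

Lemma patch_lhs_ge k : 0 < k < 2 * PI -> 1 + k^2/48 <= patch_lhs k.
Proof.
  intros Hk; rewrite patch_lhs_tan by lra.
  pose proof (tan_ge_cubic (k/4) ltac:(lra)).
  apply Rle_div_r; lra.
Qed.

Lemma patch_lhs_le k : 0 < k <= 4 -> patch_lhs k <= 1 + k^2/48 + k^4/256.
Proof.
  intros Hk; rewrite patch_lhs_tan by lra.
  pose proof (tan_le_quintic (k/4) ltac:(lra)).
  apply Rle_div_l; lra.
Qed.

Definition patch_coef (r : R) : R := (1 - r^2/48) / (1 - 7 * r^2/48).

Lemma patch_rhs_coef mu r k : patch_rhs mu r k = patch_coef r * (1 - k^2/mu).
Proof. reflexivity. Qed.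

Lemma patch_coef_sub1 r : 0 < r < 1 -> patch_coef r - 1 = r^2 * (7 * patch_coef r - 1) / 48.
Proof. intros; unfold patch_coef; field; nra. Qed.

Lemma patch_coef_gt1 r : 0 < r < 1 -> 1 < patch_coef r.
Proof. intros; unfold patch_coef; apply Rlt_div_r; nra. Qed.

Lemma patch_coef_le r : 0 < r < 1 -> patch_coef r <= 48/41.
Proof. intros; unfold patch_coef; apply Rle_div_l; nra. Qed.

Lemma patch_coef_sub1_le r : 0 < r < 1 -> patch_coef r - 1 <= r^2 / 6.
Proof.
  intros Hr; rewrite (patch_coef_sub1 r Hr).
  pose proof (patch_coef_le r Hr).
  apply Rle_div_l; [lra|]; nra.
Qed.

Definition patch_gap (mu r k : R) : R := patch_lhs k - patch_rhs mu r k.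

Section PatchRoot.

Variables mu r : R.
Hypothesis mu_gt0 : 0 < mu.
Hypothesis r_range : 0 < r < 1.

Lemma patch_gap_lt k1 k2 :
  0 < k1 -> k1 < k2 -> k2 < 2 * PI -> patch_gap mu r k1 < patch_gap mu r k2.
Proof.
  intros H1 H12 H2; unfold patch_gap; rewrite !patch_rhs_coef.
  pose proof (patch_lhs_lt k1 k2 H1 H12 H2).
  pose proof (patch_coef_gt1 r r_range).
  assert (k1^2 / mu < k2^2 / mu) by (apply Rmult_lt_compat_r; [apply Rinv_0_lt_compat|]; nra).
  nra.
Qed.

Lemma patch_gap_continuous k : 0 < k < 2 * PI -> continuity_pt (patch_gap mu r) k.
Proof.
  intros Hk; apply continuity_pt_filterlim.
  apply (ex_derive_continuous (K := R_AbsRing) (V := R_NormedModule)).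
  unfold patch_gap, patch_lhs, patch_rhs; auto_derive.
  split; [lra | split; [|exact I]].
  assert (0 < cos (k * / 4)) by (apply cos_gt_0; lra).
  eexists; apply is_derive_tan; lra.
Qed.

Lemma patch_gap_neg_near_0 : exists a, 0 < a <= 1 /\ patch_gap mu r a < 0.
Proof.
  set (c := patch_coef r).
  assert (Hc : 1 < c) by apply (patch_coef_gt1 r r_range).
  assert (Hcm : 0 < c / mu) by (apply Rdiv_lt_0_compat; lra).
  set (M := 1/48 + 1/256 + c/mu).
  (* below [a], the quartic upper bound for the left-hand side stays under the right-hand side *)
  set (a := Rmin 1 ((c - 1) / (2 * M))).
  assert (HaM : a * M <= (c - 1) / 2).
  { apply Rle_trans with ((c - 1) / (2 * M) * M).
    - apply Rmult_le_compat_r; [unfold M; lra | apply Rmin_r].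
    - right; field; unfold M; lra. }
  assert (Ha : 0 < a <= 1).
  { split; [apply Rmin_glb_lt; [lra | apply Rdiv_lt_0_compat; unfold M; lra] | apply Rmin_l]. }
  exists a; split; [exact Ha|].
  unfold patch_gap; rewrite patch_rhs_coef; fold c.
  pose proof (patch_lhs_le a ltac:(lra)).
  assert (c * (1 - a^2/mu) = c - a^2 * (c/mu)) by (field; lra).
  assert (a^2 <= a) by (simpl; nra).
  assert (a^4 <= a^2) by (simpl; nra).
  unfold M in HaM; nra.
Qed.

Lemma patch_gap_3_pos : 0 < patch_gap mu r 3.
Proof.
  pose proof PI2_3_2.
  pose proof (patch_coef_gt1 r r_range); pose proof (patch_coef_le r r_range).
  pose proof (patch_lhs_ge 3 ltac:(lra)).
  assert (0 < 3^2 / mu) by (apply Rdiv_lt_0_compat; lra).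
  unfold patch_gap; rewrite patch_rhs_coef; nra.
Qed.

Lemma patch_root_unique : exists! kappa, is_root mu r kappa.
Proof.
  pose proof PI2_3_2.
  destruct patch_gap_neg_near_0 as [a [Ha Hneg]].
  assert (Hcont : forall t, a <= t <= 3 -> continuity_pt (patch_gap mu r) t)
    by (intros; apply patch_gap_continuous; lra).
  destruct (IVT_interv _ a 3 Hcont ltac:(lra) Hneg patch_gap_3_pos) as [z [Hz Hgap]].
  unfold is_root; exists z; split; [unfold patch_gap in Hgap; split; lra|].
  intros y [Hy Hroot].
  assert (Hy0 : patch_gap mu r y = 0) by (unfold patch_gap; lra).
  destruct (Rtotal_order z y) as [Hlt | [Heq | Hgt]]; [|exact Heq|].
  - pose proof (patch_gap_lt z y ltac:(lra) Hlt ltac:(lra)); lra.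
  - pose proof (patch_gap_lt y z ltac:(lra) Hgt ltac:(lra)); lra.
Qed.

End PatchRoot.

Lemma Rabs_sub_mul_le_sq q L : 0 <= q -> 0 <= L -> Rabs (q - L) * L <= Rabs (q^2 - L^2).
Proof.
  intros Hq HL.
  replace (q^2 - L^2) with ((q - L) * (q + L)) by ring.
  rewrite Rabs_mult, (Rabs_right (q + L)) by lra.
  apply Rmult_le_compat_l; [apply Rabs_pos | lra].
Qed.

Lemma limit1_in_of_sq_bound (f : R -> R) l K :
  (forall r, 0 < r < 1 -> Rabs (f r - l) <= K * r^2) ->
  limit1_in f (fun r => 0 < r < 1) l 0.
Proof.
  intros Hf eps Heps.
  set (K' := Rabs K + 1).
  assert (HK' : 0 < K') by (unfold K'; pose proof (Rabs_pos K); lra).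
  exists (Rmin 1 (eps / K')); split.
  - apply Rmin_glb_lt; [lra | apply Rdiv_lt_0_compat; lra].
  - intros r [Hr Hdist]; simpl in *; unfold R_dist in *.
    rewrite Rminus_0_r, Rabs_right in Hdist by lra.
    assert (Hreps : r * K' < eps).
    { apply Rlt_div_r; [lra|].
      apply Rlt_le_trans with (1 := Hdist), Rmin_r. }
    assert (Hr2 : 0 <= r^2 <= r) by (simpl; split; nra).
    assert (K * r^2 <= K' * r).
    { apply Rle_trans with (Rabs K * r^2); [apply Rmult_le_compat_r; [lra | apply Rle_abs]|].
      pose proof (Rabs_pos K); unfold K'; nra. }
    pose proof (Hf r Hr); lra.
Qed.

Definition patch_limit (mu : R) : R := sqrt (6 / (1 + 48 / mu)).

Lemma one_add_48_div_pos mu : 0 < mu -> 0 < 1 + 48 / mu.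
Proof. intros Hmu; pose proof (Rdiv_lt_0_compat 48 mu ltac:(lra) Hmu); lra. Qed.

Lemma patch_limit_pos mu : 0 < mu -> 0 < patch_limit mu.
Proof.
  intros Hmu; apply sqrt_lt_R0, Rdiv_lt_0_compat; [lra | exact (one_add_48_div_pos mu Hmu)].
Qed.

Lemma patch_limit_sq mu : 0 < mu -> patch_limit mu ^ 2 * (1/48 + / mu) = 1/8.
Proof.
  intros Hmu; pose proof (one_add_48_div_pos mu Hmu).
  unfold patch_limit; rewrite <- Rsqr_pow2, Rsqr_sqrt.
  - field; split; lra.
  - apply Rlt_le, Rdiv_lt_0_compat; lra.
Qed.

Section RootAsymptotics.

Variables mu r k : R.
Hypothesis mu_gt0 : 0 < mu.
Hypothesis r_range : 0 < r < 1.
Hypothesis k_root : is_root mu r k.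

Lemma root_sq_le : k^2 * (1/48 + patch_coef r / mu) <= patch_coef r - 1.
Proof.
  destruct k_root as [Hk Heq]; rewrite patch_rhs_coef in Heq.
  pose proof (patch_lhs_ge k Hk).
  assert (patch_coef r * (1 - k^2/mu) = patch_coef r - k^2 * (patch_coef r / mu))
    by (field; lra).
  nra.
Qed.

Lemma root_sq_ge : k <= 4 ->
  patch_coef r - 1 <= k^2 * (1/48 + patch_coef r / mu) + k^4/256.
Proof.
  intros Hk4; destruct k_root as [Hk Heq]; rewrite patch_rhs_coef in Heq.
  pose proof (patch_lhs_le k ltac:(lra)).
  assert (patch_coef r * (1 - k^2/mu) = patch_coef r - k^2 * (patch_coef r / mu))
    by (field; lra).
  nra.
Qed.

Lemma root_sq_le_8r2 : k^2 <= 8 * r^2.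
Proof.
  pose proof root_sq_le; pose proof (patch_coef_sub1_le r r_range).
  pose proof (patch_coef_gt1 r r_range).
  assert (0 <= k^2 * (patch_coef r / mu))
    by (apply Rmult_le_pos; [apply pow2_ge_0 | apply Rlt_le, Rdiv_lt_0_compat; lra]).
  nra.
Qed.

Lemma root_sq_estimate : Rabs ((k/r)^2 * (1/48 + /mu) - 1/8) <= r^2 * (1 + 2/mu).
Proof.
  set (c := patch_coef r); set (m := / mu); set (q := k / r).
  assert (Hm : 0 < m) by (apply Rinv_0_lt_compat; lra).
  assert (Hc : 1 < c) by apply (patch_coef_gt1 r r_range).
  assert (Hc1 : c - 1 <= r^2 / 6) by apply (patch_coef_sub1_le r r_range).
  assert (Hsub : c - 1 = r^2 * (7 * c - 1) / 48) by apply (patch_coef_sub1 r r_range).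
  assert (Hkq : k = q * r) by (unfold q; field; lra).
  assert (Hr2 : 0 < r^2) by nra.
  assert (Hq2 : q^2 <= 8).
  { pose proof root_sq_le_8r2 as H; rewrite Hkq in H.
    apply (Rmult_le_reg_r (r^2)); [exact Hr2 | nra]. }
  assert (Hk4 : k <= 4) by (pose proof root_sq_le_8r2; nra).
  assert (Up : q^2 * (1/48 + c * m) <= (7 * c - 1) / 48).
  { pose proof root_sq_le as H; fold c in H; rewrite Hkq, Hsub in H.
    replace ((q * r)^2 * (1/48 + c / mu)) with (q^2 * (1/48 + c * m) * r^2) in H
      by (unfold m; field; lra).
    apply (Rmult_le_reg_r (r^2)); lra. }
  assert (Lo : (7 * c - 1) / 48 <= q^2 * (1/48 + c * m) + q^4 * r^2 / 256).
  { pose proof (root_sq_ge Hk4) as H; fold c in H; rewrite Hkq, Hsub in H.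
    replace ((q * r)^2 * (1/48 + c / mu) + (q * r)^4 / 256)
      with ((q^2 * (1/48 + c * m) + q^4 * r^2 / 256) * r^2) in H by (unfold m; field; lra).
    apply (Rmult_le_reg_r (r^2)); lra. }
  assert (Hq4 : q^4 <= 64).
  { replace (q^4) with (q^2 * q^2) by ring; pose proof (pow2_ge_0 q); nra. }
  assert (T1 : q^4 * r^2 / 256 <= r^2 / 4) by nra.
  assert (T2 : 0 <= q^2 * (c - 1) * m <= 8 * (r^2 / 6) * m).
  { pose proof (pow2_ge_0 q).
    split; [apply Rmult_le_pos; [apply Rmult_le_pos|]; lra |].
    apply Rmult_le_compat_r; [lra|]; apply Rmult_le_compat; lra. }
  assert (E : q^2 * (1/48 + m) - 1/8 = q^2 * (1/48 + c * m) - q^2 * (c - 1) * m - 1/8)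
    by ring.
  assert (0 <= r^2 * m) by nra.
  replace (2 / mu) with (2 * m) by reflexivity.
  rewrite E; apply Rabs_le; split; lra.
Qed.

Lemma root_div_r_approx :
  Rabs (k/r - patch_limit mu) <= (1 + 2/mu) / (patch_limit mu * (1/48 + /mu)) * r^2.
Proof.
  destruct k_root as [Hk _].
  pose proof (patch_limit_pos mu mu_gt0) as HL.
  assert (HD : 0 < 1/48 + /mu) by (pose proof (Rinv_0_lt_compat mu mu_gt0); lra).
  assert (Hdev : Rabs (k/r - patch_limit mu) * patch_limit mu * (1/48 + /mu)
                 <= r^2 * (1 + 2/mu)).
  { apply Rle_trans with (2 := root_sq_estimate).
    rewrite <- (patch_limit_sq mu mu_gt0), <- Rmult_minus_distr_r, Rabs_mult,
      (Rabs_right (1/48 + /mu)) by lra.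
    apply Rmult_le_compat_r; [lra|].
    apply Rabs_sub_mul_le_sq; [apply Rlt_le, Rdiv_lt_0_compat | ]; lra. }
  rewrite Rmult_assoc in Hdev; apply Rle_div_r in Hdev; [|apply Rmult_lt_0_compat; lra].
  replace ((1 + 2/mu) / (patch_limit mu * (1/48 + /mu)) * r^2)
    with (r^2 * (1 + 2/mu) / (patch_limit mu * (1/48 + /mu))) by (field; lra).
  exact Hdev.
Qed.

End RootAsymptotics.

Lemma Rinv_eq_div_iff x a y : a <> 0 -> y <> 0 -> / x = y / a <-> x = a / y.
Proof.
  intros Ha Hy; split; intro E.
  - rewrite <- (Rinv_inv x), E; field; split; assumption.
  - rewrite E; field; split; assumption.
Qed.

Lemma PI_sq_lt_24 : PI^2 < 24.
Proof. pose proof PI_4; pose proof PI_RGT_0; nra. Qed.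

Lemma patch_limit_eq_half_PI_iff mu :
  0 < mu -> patch_limit mu = PI/2 <-> / mu = (24 / PI^2 - 1) / 48.
Proof.
  intros Hmu; pose proof PI_RGT_0 as HPI.
  pose proof (one_add_48_div_pos mu Hmu) as Hden.
  assert (Hrad : 0 <= 6 / (1 + 48 / mu)) by (apply Rlt_le, Rdiv_lt_0_compat; lra).
  transitivity (PI/2 * (PI/2) * (1 + 48 / mu) = 6).
  - unfold patch_limit; split; intro E.
    + rewrite (sqrt_lem_0 _ (PI/2) Hrad ltac:(lra) E); field; lra.
    + apply (sqrt_lem_1 _ _ Hrad); [lra | rewrite <- E; field; lra].
  - replace (48 / mu) with (48 * / mu) by reflexivity.
    split; intro E.
    + apply (Rmult_eq_reg_l (48 * PI^2)); [|nra].
      replace (48 * PI^2 * ((24 / PI^2 - 1) / 48)) with (24 - PI^2) by (field; lra).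
      lra.
    + rewrite E; field; lra.
Qed.

Theorem mainTheorem4 (mu : R) (hmu : 0 < mu) :
  (forall r : R, 0 < r < 1 -> exists! kappa : R, is_root mu r kappa) /\
  (forall kappa : R -> R,
     (forall r : R, 0 < r < 1 -> is_root mu r (kappa r)) ->
     limit1_in (fun r => kappa r / r) (fun r => 0 < r < 1)
               (sqrt (6 / (1 + 48 / mu))) 0) /\
  (sqrt (6 / (1 + 48 / mu)) = PI / 2 <-> / mu = (24 / PI ^ 2 - 1) / 48) /\
  (/ mu = (24 / PI ^ 2 - 1) / 48 <-> mu = 48 / (24 / PI ^ 2 - 1)).
Proof.
  split; [|split; [|split]].
  - intros r Hr; exact (patch_root_unique mu r hmu Hr).
  - intros kappa Hroot.
    apply limit1_in_of_sq_bound with (K := (1 + 2/mu) / (patch_limit mu * (1/48 + /mu))).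
    intros r Hr; exact (root_div_r_approx mu r (kappa r) hmu Hr (Hroot r Hr)).
  - exact (patch_limit_eq_half_PI_iff mu hmu).
  - pose proof PI_sq_lt_24; pose proof PI_RGT_0.
    apply Rinv_eq_div_iff; [lra|].
    apply Rgt_not_eq, Rgt_minus; unfold Rgt; apply Rlt_div_r; nra.
Qed.
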